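(* Let $p$ be a prime and $d$ a power of $p$. If $n_0+n_1d=m_0+m_1d$ for integers $0\le n_0<d$ and $n_1,m_0,m_1\ge0$, then $$v_p\!\left(\frac{m_0!\,m_1!}{n_0!\,n_1!}\right)\le (n_1-m_1)\,v_p(d!).$$
   Context: $v_p$ denotes the $p$-adic valuation on $\mathbb{Q}$. *)

From mathcomp Require Import all_boot all_order all_algebra.
Set Implicit Arguments. Unset Strict Implicit. Unset Printing Implicit Defensive.
Import Order.TTheory GRing.Theory Num.Theory.
Local Open Scope ring_scope.

(* p-adic valuation on Q (v_p(0) = 0 by convention; irrelevant here since
   the argument is a positive rational). For x = a/b in lowest terms,
   v_p(x) = v_p(a) - v_p(b). *)
Definition vp (p : nat) (x : rat) : int :=
  (logn p `|numq x|%N)%:Z - (logn p `|denq x|%N)%:Z.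

From mathcomp Require Import all_boot all_order all_algebra zify.
Set Implicit Arguments. Unset Strict Implicit. Unset Printing Implicit Defensive.
Import Order.TTheory GRing.Theory Num.Theory.

(* Since n0 is a genuine
   base-d digit, m1 <= n1 and m0 = n0 + t d with t = n1 - m1.  Legendre's
   formula v_p(N!) = sum_{i>=1} floor(N / p^i) then splits exactly along this
   digit decomposition:
       v_p((n0 + t p^k)!) = v_p(n0!) + t v_p((p^k)!) + v_p(t!),
   the exponents i <= k seeing n0 and t copies of p^k, the exponents i > k
   seeing only t.  Integrality of binomial coefficients gives
   v_p(t!) + v_p(m1!) <= v_p((t + m1)!) = v_p(n1!), and combining the two
   bounds the valuation of m0! m1! / (n0! n1!) by t v_p(d!). *)

Lemma legendre_sum_stable p N M a : 1 < p -> N < p ^ M.+1 -> M <= a ->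
  \sum_(1 <= i < a.+1) N %/ p ^ i = \sum_(1 <= i < M.+1) N %/ p ^ i.
Proof.
move=> p_gt1 N_lt le_Ma; rewrite (big_cat_nat _ (n := M.+1)) //=.
rewrite [X in _ + X]big1_seq ?addn0 // => i /andP[_].
rewrite mem_index_iota => /andP[lt_Mi _]; apply/divn_small.
by apply: leq_trans N_lt _; rewrite leq_exp2l.
Qed.

Lemma logn_fact_trunc p N M : prime p -> N < p ^ M.+1 ->
  logn p N`! = \sum_(1 <= i < M.+1) N %/ p ^ i.
Proof.
move=> p_pr N_lt; have p_gt1 := prime_gt1 p_pr.
have N_ltN : N < p ^ N.+1 by apply: ltn_trans (ltn_expl N p_gt1) _; rewrite ltn_exp2l.
rewrite logn_fact // -(legendre_sum_stable p_gt1 N_ltN (leq_maxl N M)).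
exact: legendre_sum_stable p_gt1 N_lt (leq_maxr N M).
Qed.

Lemma logn_fact_shift p k n0 t : prime p -> n0 < p ^ k ->
  logn p (n0 + t * p ^ k)`! = logn p n0`! + t * logn p (p ^ k)`! + logn p t`!.
Proof.
move=> p_pr n0_lt; have p_gt1 := prime_gt1 p_pr; have p_gt0 := ltnW p_gt1.
have ltS m n : m <= p ^ n -> m < p ^ n.+1.
  by move=> le_m; apply: leq_ltn_trans le_m _; rewrite ltn_exp2l.
have N_lt : n0 + t * p ^ k < p ^ (k + t).+1.
  apply: ltS; rewrite expnD [p ^ k * _]mulnC; apply: leq_trans (_ : t.+1 * p ^ k <= _).
    by rewrite mulSn leq_add2r ltnW.
  by rewrite leq_mul2r ltn_expl ?orbT.
rewrite (logn_fact_trunc p_pr N_lt) (logn_fact_trunc p_pr (ltS _ _ (ltnW n0_lt))).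
rewrite (logn_fact_trunc p_pr (ltS _ _ (leqnn _))).
rewrite (logn_fact_trunc p_pr (ltS _ t (ltnW (ltn_expl t p_gt1)))).
rewrite (big_cat_nat _ (n := k.+1)) //= ?ltnS ?leq_addr //; congr (_ + _).
  rewrite big_distrr -big_split /=; apply: eq_big_nat => i /andP[_ le_ik].
  rewrite ltnS in le_ik.
  rewrite -{1}(subnK le_ik) expnD mulnA divnDMl ?expn_gt0 ?p_gt0 //.
  by rewrite -{2}(subnK le_ik) expnD mulnK ?expn_gt0 ?p_gt0.
rewrite -{1}(add1n k) big_addn -(addnS k t) addKn; apply: eq_bigr => i _.
by rewrite [i + k]addnC expnD divnMA divnDMl ?expn_gt0 ?p_gt0 // (divn_small n0_lt).
Qed.

(* v_p(a!) + v_p(b!) <= v_p((a + b)!), since (a + b)! / (a! b!) is an integer. *)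
Lemma logn_fact_add_le p a b : logn p a`! + logn p b`! <= logn p (a + b)`!.
Proof.
rewrite -(bin_fact (leq_addr b a)) addKn.
rewrite lognM ?muln_gt0 ?fact_gt0 ?bin_gt0 ?leq_addr // lognM ?fact_gt0 //.
exact: leq_addl.
Qed.

Lemma digit_split_shift d n0 n1 m0 m1 : n0 < d ->
  n0 + n1 * d = m0 + m1 * d -> m1 <= n1 /\ m0 = n0 + (n1 - m1) * d.
Proof.
move=> n0_lt eq_nm.
have le_m1n1 : m1 <= n1.
  rewrite leqNgt; apply/negP => lt_n1m1.
  have : n0 + n1 * d < m1 * d.
    apply: (@leq_trans (n1.+1 * d)); first by rewrite mulSn ltn_add2r.
    by rewrite leq_mul2r lt_n1m1 orbT.
  by rewrite eq_nm ltnNge leq_addl.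
split=> //; apply/(@addIn (m1 * d)).
by rewrite -eq_nm -addnA -mulnDl subnK.
Qed.

Local Open Scope ring_scope.

(* On a ratio of positive integers, vp is the difference of the p-adic
   logarithms, whatever common factor the reduced form has removed. *)
Lemma vp_ratio (p A B : nat) : (0 < A)%N -> (0 < B)%N ->
  vp p (A%:R / B%:R) = (logn p A)%:Z - (logn p B)%:Z.
Proof.
move=> A_gt0 B_gt0; set x : rat := A%:R / B%:R.
have B_neq0 : (B%:R : rat) != 0 by rewrite pnatr_eq0 -lt0n.
have cross : numq x * B%:Z = A%:Z * denq x.
  by apply: (@intr_inj rat); rewrite !rmorphM /= numqE /x mulrAC divfK.
have num_gt0 : (0 < `|numq x|)%N.
  by rewrite absz_gt0 numq_eq0 /x mulf_neq0 ?invr_eq0 // pnatr_eq0 -lt0n.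
have den_gt0 : (0 < `|denq x|)%N by rewrite absz_gt0 denq_eq0.
have /(congr1 (logn p)) : (`|numq x| * B = A * `|denq x|)%N.
  by rewrite -[B]/`|B%:Z|%N -[A]/`|A%:Z|%N -!abszM cross.
rewrite !lognM // /vp; lia.
Qed.

Theorem lemma2p3 (p k d n0 n1 m0 m1 : nat) :
  prime p -> d = (p ^ k)%N ->
  (n0 < d)%N ->
  (n0 + n1 * d)%N = (m0 + m1 * d)%N ->
  vp p ((m0`!)%:R * (m1`!)%:R / ((n0`!)%:R * (n1`!)%:R) : rat)
    <= (n1%:Z - m1%:Z) * (logn p d`!)%:Z.
Proof.
move=> p_pr -> n0_lt eq_nm.
have [le_m1n1 m0_def] := digit_split_shift n0_lt eq_nm.
set t := (n1 - m1)%N in m0_def.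
have n1_def : n1 = (t + m1)%N by rewrite subnK.
have shift := logn_fact_shift t p_pr n0_lt.
have superadd := logn_fact_add_le p t m1.
rewrite -m0_def in shift; rewrite -n1_def in superadd.
rewrite -!natrM vp_ratio ?muln_gt0 ?fact_gt0 // !lognM ?fact_gt0 //.
rewrite (subzn le_m1n1); lia.
Qed.
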